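(* Under the standing assumptions, let $u\in X\setminus\{0\}$ and $\zeta\in X^*$. Then $u$ is a $p$-eigenvector of $J$ with subgradient $\zeta$ (and eigenvalue $\lambda=R(u)$) if and only if all of the following hold: (i) $\zeta\in\partial J(u)$; (ii) $\langle\zeta,u-v\rangle\ge0$ for all $v\in X$ with $|v|_H\le|u|_H$; (iii) $|\zeta|_{H^*}\,|u|_H=pJ(u)$. Moreover, condition (ii) implies $\langle\zeta,u\rangle=|\zeta|_{H^*}|u|_H$.
   Context: Standing assumptions: $X$ is a real reflexive Banach space with dual $X^*$ and duality pairing $\langle\cdot,\cdot\rangle$; $\Gamma_0(X)$ is the class of proper, lower semi-continuous, convex functionals $X\to\mathbb{R}\cup\{+\infty\}$. Fix $1<p<\infty$ and $q=\frac{p}{p-1}$. Let $J\in\Gamma_0(X)$, and let $H\in\Gamma_0(X)$ be absolutely $p$-homogeneous ($H(tu)=|t|^pH(u)$) such that $|u|_H:=(pH(u))^{1/p}$ is a norm on $X$, so $H(u)=\frac1p|u|_H^p$. The dual norm is $|\zeta|_{H^*}=\sup_{u\ne0}\langle\zeta,u\rangle/|u|_H$, and $H^*(\zeta)=\frac1q|\zeta|_{H^*}^q$. The subdifferential is $\partial J(u)=\{\zeta\in X^*:\ J(u)+\langle\zeta,v-u\rangle\le J(v)\ \forall v\in X\}$. Growth assumption: there is $c>0$ with $H(u)\le cJ(u)$ for all $u\in X$. The Rayleigh quotient is $R(u)=J(u)/H(u)$ for $u\ne0$. A $p$-eigenvector of $J$: $u\in X\setminus\{0\}$ with subgradient $\zeta\in\partial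 J(u)$ and eigenvalue $\lambda=R(u)\in\mathbb{R}$ such that $\zeta\in\lambda\,\partial H(u)$. *)

From HB Require Import structures.
From mathcomp Require Import all_boot all_order all_algebra.
From mathcomp Require Import all_classical all_reals all_analysis.
Set Implicit Arguments. Unset Strict Implicit. Unset Printing Implicit Defensive.
Import Order.TTheory GRing.Theory Num.Theory.
Import numFieldNormedType.Exports.
Local Open Scope classical_set_scope.
Local Open Scope ring_scope.

Section Defs.
Context {R : realType} {X : completeNormedModType R}.

(* Elements of the topological dual X^*: continuous linear functionals X -> R;
   the duality pairing <zeta, x> is application zeta x. *)
Definition is_dual (f : X -> R) : Prop :=
  (forall (a : R) (x y : X), f (a *: x + y) = a * f x + f y) /\ continuous f.

Definition dual_opnorm (f : X -> R) : \bar R :=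
  ereal_sup [set (`|f x|)%:E | x in [set x : X | `|x| <= 1]].

Definition reflexive_space : Prop :=
  forall Phi : (X -> R) -> R,
    (forall (a : R) (f g : X -> R), is_dual f -> is_dual g ->
        Phi (fun x => a * f x + g x) = a * Phi f + Phi g) ->
    (exists C : R, forall f, is_dual f -> `|Phi f| <= C * fine (dual_opnorm f)) ->
    exists x : X, forall f, is_dual f -> Phi f = f x.

Definition proper (F : X -> \bar R) : Prop :=
  (forall x, (-oo < F x)%E) /\ exists x, (F x < +oo)%E.

Definition convex_fun (F : X -> \bar R) : Prop :=
  forall (x y : X) (t : R), 0 < t < 1 ->
    (F (t *: x + (1 - t) *: y)%R <= t%:E * F x + (1 - t)%:E * F y)%E.

Definition Gamma0 (F : X -> \bar R) : Prop :=
  proper F /\ lower_semicontinuous F /\ convex_fun F.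

Definition abs_p_homogeneous (p : R) (H : X -> \bar R) : Prop :=
  forall (t : R) (u : X), H (t *: u) = ((`|t| `^ p)%:E * H u)%E.

Definition Hnorm (p : R) (H : X -> \bar R) (u : X) : R :=
  (p * fine (H u)) `^ (p^-1).

Definition is_norm (N : X -> R) : Prop :=
  (forall u, 0 <= N u) /\ (forall u, N u = 0 -> u = 0) /\
  (forall (t : R) u, N (t *: u) = `|t| * N u) /\
  (forall u v, N (u + v) <= N u + N v).

Definition Hdualnorm (p : R) (H : X -> \bar R) (zeta : X -> R) : \bar R :=
  ereal_sup [set (zeta u / Hnorm p H u)%:E | u in [set u : X | u != 0]].

Definition subdiff (F : X -> \bar R) (u : X) (zeta : X -> R) : Prop :=
  is_dual zeta /\ forall v : X, (F u + (zeta (v - u))%:E <= F v)%E.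

Definition rayleigh (J H : X -> \bar R) (u : X) : \bar R :=
  (J u * ((fine (H u))^-1)%:E)%E.

Definition p_eigenvector (J H : X -> \bar R) (u : X) (zeta : X -> R) : Prop :=
  u != 0 /\ subdiff J u zeta /\
  exists lambda : R, rayleigh J H u = lambda%:E /\
    exists eta : X -> R, subdiff H u eta /\ zeta = (fun x => lambda * eta x).

End Defs.

(* A subgradient [eta] of the p-homogeneous [H] at [u] satisfies [eta u = p H u]
   (differentiate [t |-> H (t u)] at [t = 1]) and [u] maximizes [eta] on the
   [|.|_H]-ball of radius [|u|_H]; by Young's inequality these two properties
   conversely characterize [subdiff H u]. Condition (ii) is this maximizing
   property for [zeta], which forces [|zeta|_H^* |u|_H = zeta u]; writing
   [zeta = R(u) eta] with [R(u) > 0], condition (iii) is then [eta u = p H u]. *)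

From Pilot Require Import Defs.
From HB Require Import structures.
From mathcomp Require Import all_boot all_order all_algebra.
From mathcomp Require Import all_classical all_reals all_analysis.
From mathcomp Require Import ring lra.
Import Order.TTheory GRing.Theory Num.Theory.
Import numFieldNormedType.Exports.
Local Open Scope classical_set_scope.
Local Open Scope ring_scope.

Section RealFacts.
Context {R : realType}.

Lemma powR_tangent_slope (h e p : R) :
  (forall t : R, 0 < t -> h + (t - 1) * e <= t `^ p * h) -> e = p * h.
Proof.
move=> tangent.
pose f := (h \*: (@powR R ^~ p) - e \*: (@id R)) : R -> R.
have f_derive (t : R) : 0 < t -> is_derive t 1 f (h *: (p * t `^ (p - 1)) - e *: 1).
  move=> t0; apply: is_deriveB.
  exact: (is_deriveZ h (is_derive1_powR p t0)).
have f_derivable t : t \in `]0, 2[ -> derivable f t 1.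
  by rewrite in_itv/= => /andP[t0 _]; have [] := f_derive t t0.
have fE t : f t = h * t `^ p - e * t by [].
have f_min1 t : t \in `]0, 2[ -> f 1 <= f t.
  rewrite in_itv/= => /andP[t0 _]; rewrite !fE powR1.
  have := tangent t t0; lra.
have in02 : (1 : R) \in `]0, 2[ by rewrite in_itv/=; apply/andP; split; lra.
have := @derive_val _ _ _ _ _ _ _ (derive1_at_min (ler0n _ 2) f_derivable in02 f_min1).
have f_derive1 := f_derive 1 ltr01.
rewrite derive_val powR1 /GRing.scale /= !mulr1.
by move/eqP; rewrite subr_eq0 mulrC => /eqP.
Qed.

Lemma young_powR [a b p : R] : 0 <= a -> 0 <= b -> 1 < p ->
  a * b `^ (p - 1) <= a `^ p / p + (1 - p^-1) * b `^ p.
Proof.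
move=> a0 b0 p1; pose q := p / (p - 1).
have p_gt0 : 0 < p by lra.
have p1_neq0 : p - 1 != 0 by rewrite subr_eq0 gt_eqF.
have q_gt0 : 0 < q by rewrite divr_gt0// subr_gt0.
have pq : p^-1 + q^-1 = 1 by rewrite /q invf_div; field; rewrite gt_eqF.
have := conjugate_powR a0 (powR_ge0 b (p - 1)) p_gt0 q_gt0 pq.
rewrite -powRrM /q [(p - 1) * _]mulrC divfK// invf_div.
suff -> : b `^ p * ((p - 1) / p) = (1 - p^-1) * b `^ p by [].
by field; rewrite gt_eqF.
Qed.

End RealFacts.

Section Dual.
Context {R : realType} {X : completeNormedModType R}.
Context {f : X -> R} (df : is_dual f).

Lemma dual0 : f 0 = 0.
Proof.
have := df.1 1 0 0; rewrite scale1r addr0 mul1r; lra.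
Qed.

Lemma dualZ a x : f (a *: x) = a * f x.
Proof. by have := df.1 a x 0; rewrite addr0 dual0 addr0. Qed.

Lemma dualB x y : f (x - y) = f x - f y.
Proof. by rewrite -scaleN1r addrC df.1 mulN1r addrC. Qed.

Lemma is_dualZ a : is_dual (fun x => a * f x).
Proof.
split; first by move=> b x y; rewrite df.1 mulrDr mulrCA.
by move=> x; apply: cvgM; [exact: cvg_cst | exact: df.2].
Qed.

End Dual.

Section Norm.
Context {R : realType} {X : completeNormedModType R}.
Context {N : X -> R} (nrm : is_norm N).

Lemma norm0 : N 0 = 0.
Proof. by have := nrm.2.2.1 0 0; rewrite scale0r normr0 mul0r. Qed.

Lemma norm_gt0 [u : X] : u != 0 -> 0 < N u.
Proof.
move=> u0; rewrite lt_neqAle nrm.1 andbT.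
by apply/eqP => /esym/(nrm.2.1 u); apply/eqP.
Qed.

(* Compare [zeta] with its value on the multiple of [v] of the same norm as [u]. *)
Lemma maximizer_dual_le [zeta : X -> R] [u : X] : is_dual zeta -> 0 < N u ->
  (forall v, N v <= N u -> 0 <= zeta (u - v)) ->
  forall v, zeta v * N u <= zeta u * N v.
Proof.
move=> dz Nu0 maxu v; have [->|v0] := eqVneq v 0.
  by rewrite (dual0 dz) norm0 mul0r mulr0.
have Nv0 := norm_gt0 v0.
have := maxu ((N u / N v) *: v).
rewrite nrm.2.2.1 ger0_norm ?divr_ge0 ?(ltW Nu0) ?(ltW Nv0)//.
rewrite divfK ?gt_eqF// lexx => /(_ isT).
by rewrite (dualB dz) (dualZ dz) subr_ge0 mulrAC ler_pdivrMr// mulrC.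
Qed.

End Norm.

Lemma Hdualnorm_maximizer {R : realType} {X : completeNormedModType R}
    [p : R] [H : X -> \bar R] [zeta : X -> R] [u : X] :
  is_norm (Hnorm p H) -> is_dual zeta -> u != 0 ->
  (forall v, Hnorm p H v <= Hnorm p H u -> 0 <= zeta (u - v)) ->
  (zeta u)%:E = (Hdualnorm p H zeta * (Hnorm p H u)%:E)%E.
Proof.
move=> nrm dz u0 maxu; have Nu0 := norm_gt0 nrm u0.
suff -> : Hdualnorm p H zeta = (zeta u / Hnorm p H u)%:E.
  by rewrite -EFinM divfK ?gt_eqF.
apply/eqP; rewrite eq_le; apply/andP; split.
  apply: ge_ereal_sup => _ [w /= w0 <-]; rewrite lee_fin.
  have Nw0 := norm_gt0 nrm w0.
  by rewrite ler_pdivrMr// mulrAC ler_pdivlMr// maximizer_dual_le.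
by apply: ereal_sup_ubound; exists u.
Qed.

Lemma subdiff_fin {R : realType} {X : completeNormedModType R}
    [F : X -> \bar R] [u : X] [zeta : X -> R] :
  Defs.proper F -> subdiff F u zeta -> F u \is a fin_num.
Proof.
move=> [Fninfty [x Fx]] [_ sub]; have := sub x; have := Fninfty u.
case: (F u) => //= _; rewrite leye_eq => /eqP Fxoo.
by move: Fx; rewrite Fxoo ltxx.
Qed.

Section Homogeneous.
Context {R : realType} {X : completeNormedModType R}.
Context {p : R} {H : X -> \bar R}.
Hypotheses (p1 : 1 < p) (cvxH : convex_fun H) (homH : abs_p_homogeneous p H)
  (finH : forall u, H u \is a fin_num).

Let N := Hnorm p H.
Let h v := fine (H v).
Let p_gt0 : 0 < p. Proof. exact: lt_trans ltr01 p1. Qed.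
Let hE v : H v = (h v)%:E. Proof. by rewrite /h fineK. Qed.

(* [H] is even with [H 0 = 0], so convexity at the midpoint of [v] and [-v] gives [0 <= H v]. *)
Lemma H_ge0 v : 0 <= h v.
Proof.
have H0 : h 0 = 0.
  by rewrite /h -(scale0r v) homH normr0 powR0 ?gt_eqF// mul0e.
have HN : h (- v) = h v by rewrite /h -scaleN1r homH normrN1 powR1 mul1e.
have half : 0 < (2^-1 : R) < 1 by apply/andP; split; lra.
have := cvxH v (- v) _ half.
have -> : 2^-1 *: v + (1 - 2^-1) *: - v = 0 :> X.
  have -> : (1 - 2^-1 : R) = 2^-1 by lra.
  by rewrite scalerN subrr.
rewrite !hE H0 HN -!EFinM -EFinD lee_fin; lra.
Qed.

Lemma Hnorm_powR v : N v `^ p = p * h v.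
Proof.
by rewrite /N /Hnorm -powRrM mulVf ?gt_eqF// powRr1// mulr_ge0 ?H_ge0 ?ltW.
Qed.

Lemma H_le_of_Hnorm_le v w : N v <= N w -> h v <= h w.
Proof.
move=> Nvw; rewrite -(ler_pM2l p_gt0) -!Hnorm_powR.
apply: ge0_ler_powR => //; [exact: ltW | rewrite nnegrE; exact: powR_ge0..].
Qed.

(* Testing the subgradient inequality along the ray [t *: u] shows that
   [t |-> t^p H u] has a supporting line of slope [eta u] at [t = 1]. *)
Lemma subdiff_H_self [u eta] : subdiff H u eta -> eta u = p * h u.
Proof.
move=> [deta sub]; apply: powR_tangent_slope => t t0.
have := sub (t *: u); rewrite homH !hE -EFinM -EFinD lee_fin.
by rewrite (dualB deta) (dualZ deta) gtr0_norm// mulrBl mul1r.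
Qed.

Lemma subdiff_H_maximizer [u eta v] :
  subdiff H u eta -> N v <= N u -> 0 <= eta (u - v).
Proof.
move=> [deta sub] /H_le_of_Hnorm_le hvu; have := sub v.
by rewrite (hE u) (hE v) -EFinD lee_fin !(dualB deta); lra.
Qed.

(* Conversely, by Young's inequality [eta v <= |v| |u|^(p-1) <= H v + (p - 1) H u]. *)
Lemma maximizer_subdiff_H [u eta] : is_norm N -> u != 0 -> is_dual eta ->
  eta u = p * h u -> (forall v, N v <= N u -> 0 <= eta (u - v)) ->
  subdiff H u eta.
Proof.
move=> nrm u0 deta etau maxu; split => // v.
have Nu0 := norm_gt0 nrm u0.
have NuE : N u * N u `^ (p - 1) = p * h u by rewrite mulr_powRB1 ?Hnorm_powR ?ltW.
have eta_le : eta v <= N v * N u `^ (p - 1).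
  rewrite -(ler_pM2r Nu0) (le_trans (maximizer_dual_le nrm deta Nu0 maxu v))//.
  by rewrite etau -NuE le_eqVlt; apply/orP; left; apply/eqP; ring.
have := young_powR (nrm.1 v) (nrm.1 u) p1; rewrite !Hnorm_powR.
have -> : p * h v / p = h v by field; rewrite gt_eqF.
have -> : (1 - p^-1) * (p * h u) = p * h u - h u by field; rewrite gt_eqF.
rewrite (hE u) (hE v) -EFinD lee_fin (dualB deta) etau; lra.
Qed.

End Homogeneous.

Section Eigenvector.
Context {R : realType} {X : completeNormedModType R}.
Context {p : R} {J H : X -> \bar R} {c : R}.
Hypotheses (p1 : 1 < p) (properJ : Defs.proper J) (cvxH : convex_fun H)
  (homH : abs_p_homogeneous p H) (finH : forall u, H u \is a fin_num)
  (nrm : is_norm (Hnorm p H))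
  (c_gt0 : 0 < c) (growth : forall u, (H u <= c%:E * J u)%E).
Context {u : X} {zeta : X -> R}.
Hypotheses (u0 : u != 0) (dz : is_dual zeta).

Let N := Hnorm p H.
Let h v := fine (H v).
Let j := fine (J u).

Let hu_gt0 : 0 < h u.
Proof.
have p_gt0 : 0 < p := lt_trans ltr01 p1.
by rewrite -(pmulr_rgt0 _ p_gt0) -Hnorm_powR// powR_gt0// norm_gt0.
Qed.

Let JuE : subdiff J u zeta -> J u = j%:E.
Proof. by move=> sJ; rewrite /j fineK// (subdiff_fin properJ sJ). Qed.

Let j_gt0 : subdiff J u zeta -> 0 < j.
Proof.
move=> /JuE Ju; have := growth u; rewrite -(fineK (finH u)) Ju -EFinM lee_fin.
by move=> /(lt_le_trans hu_gt0); rewrite pmulr_rgt0.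
Qed.

Lemma p_eigenvector_conditions : p_eigenvector J H u zeta ->
  [/\ subdiff J u zeta,
      forall v, N v <= N u -> 0 <= zeta (u - v) &
      (Hdualnorm p H zeta * (N u)%:E = p%:E * J u)%E].
Proof.
move=> [_ [sJ [lam [lamE [eta [sH zetaE]]]]]].
have lamE' : lam = j / h u.
  by move: lamE; rewrite /rayleigh (JuE sJ) -EFinM => -[].
have lam_gt0 : 0 < lam by rewrite lamE' divr_gt0 ?j_gt0.
have maxu v : N v <= N u -> 0 <= zeta (u - v).
  move=> /(subdiff_H_maximizer p1 cvxH homH finH sH); rewrite zetaE.
  by apply: mulr_ge0; apply: ltW.
split => //; rewrite /N -(Hdualnorm_maximizer nrm dz u0 maxu) zetaE.
rewrite (subdiff_H_self homH finH sH) lamE' (JuE sJ) -EFinM.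
by congr EFin; rewrite /h; field; rewrite gt_eqF.
Qed.

Lemma conditions_p_eigenvector :
  [/\ subdiff J u zeta,
      forall v, N v <= N u -> 0 <= zeta (u - v) &
      (Hdualnorm p H zeta * (N u)%:E = p%:E * J u)%E] ->
  p_eigenvector J H u zeta.
Proof.
move=> [sJ maxu dualnormE]; have j0 := j_gt0 sJ.
have zetau : zeta u = p * j.
  by move: dualnormE; rewrite -(Hdualnorm_maximizer nrm dz u0 maxu) (JuE sJ) -EFinM => -[].
pose lam := j / h u.
have lam_gt0 : 0 < lam by rewrite divr_gt0.
split => //; split => //; exists lam; split; first by rewrite /rayleigh (JuE sJ) -EFinM.
exists (fun x => lam^-1 * zeta x); split; last first.
  by apply: funext => x; rewrite mulrA mulfV ?gt_eqF// mul1r.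
apply: (maximizer_subdiff_H p1 cvxH homH finH nrm u0 (is_dualZ dz _)).
  by rewrite zetau /lam /h invf_div; field; rewrite gt_eqF.
by move=> v /maxu; apply: mulr_ge0; rewrite invr_ge0 ltW.
Qed.

End Eigenvector.

Theorem proposition2p5 (R : realType) (X : completeNormedModType R)
  (p : R) (J H : X -> \bar R) :
  @reflexive_space R X ->
  1 < p ->
  Gamma0 J ->
  Gamma0 H ->
  abs_p_homogeneous p H ->
  (forall u, H u \is a fin_num) ->
  is_norm (Hnorm p H) ->
  (exists c : R, 0 < c /\ forall u, (H u <= c%:E * J u)%E) ->
  forall (u : X) (zeta : X -> R), u != 0 -> is_dual zeta ->
  (p_eigenvector J H u zeta <->
     [/\ subdiff J u zeta,
         (forall v : X, Hnorm p H v <= Hnorm p H u -> 0 <= zeta (u - v)) &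
         (Hdualnorm p H zeta * (Hnorm p H u)%:E = p%:E * J u)%E ])
  /\ ((forall v : X, Hnorm p H v <= Hnorm p H u -> 0 <= zeta (u - v)) ->
      (zeta u)%:E = (Hdualnorm p H zeta * (Hnorm p H u)%:E)%E).
Proof.
move=> _ p1 [properJ _] [_ [_ cvxH]] homH finH nrm [c [c_gt0 growth]] u zeta u0 dz.
split; last exact: Hdualnorm_maximizer.
split.
- exact: (p_eigenvector_conditions p1 properJ cvxH homH finH nrm c_gt0 growth u0 dz).
- exact: (conditions_p_eigenvector p1 properJ cvxH homH finH nrm c_gt0 growth u0 dz).
Qed.
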